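(* Let $k\ge0$ with $k\equiv0\pmod6$ and let $j\ge1$ be an integer. Then $b_{jk}=\sum_{i=0}^{j-1}3^{\,j-i-1}\binom{j}{j-i}b_k^{\,j-i}$.
   Context: For $n=3$, define nonnegative integers $a_r,b_r,c_r$ ($r\ge0$) by $a_0=1,b_0=0,c_0=0$ and $a_r=a_{r-1}+c_{r-1}$, $b_r=b_{r-1}+a_{r-1}$, $c_r=c_{r-1}+b_{r-1}$. Equivalently, for the Ducci map $D(x_1,x_2,x_3)=(x_1+x_2,x_2+x_3,x_3+x_1)$, one has $D^r(x_1,x_2,x_3)=(a_rx_1+b_rx_2+c_rx_3,\;c_rx_1+a_rx_2+b_rx_3,\;b_rx_1+c_rx_2+a_rx_3)$. *)

From mathcomp Require Import all_boot.

Fixpoint abc (r : nat) : nat * nat * nat :=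
  match r with
  | 0 => (1, 0, 0)
  | r'.+1 => let '(a, b, c) := abc r' in (a + c, b + a, c + b)
  end.

Definition a_ (r : nat) : nat := (abc r).1.1.
Definition b_ (r : nat) : nat := (abc r).1.2.
Definition c_ (r : nat) : nat := (abc r).2.

From mathcomp Require Import all_boot.
From mathcomp Require Import zify.

(* [abc r] is the coefficient triple of (1 + g)^r in the group semiring N[C_3]
   with C_3 = <g>.  Since (1 + g)^6 = 22 + 21 (1 + g + g^2), for 6 | k the
   power (1 + g)^k has the form 1 + b (1 + g + g^2).  Such elements form a
   multiplicative monoid on which the augmentation b |-> 1 + 3 b is
   multiplicative, so 1 + 3 b_(jk) = (1 + 3 b_k)^j, and the binomial theorem
   gives the sum. *)

Definition circ_mul (u v : nat * nat * nat) : nat * nat * nat :=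
  (u.1.1 * v.1.1 + u.1.2 * v.2 + u.2 * v.1.2,
   u.1.1 * v.1.2 + u.1.2 * v.1.1 + u.2 * v.2,
   u.1.1 * v.2 + u.1.2 * v.1.2 + u.2 * v.1.1).

Lemma abcD m n : abc (m + n) = circ_mul (abc m) (abc n).
Proof.
elim: m => [|m IHm]; last rewrite addSn /= IHm.
  by rewrite add0n /circ_mul /=; case: (abc n) => [[x y] z] /=; congr (_, _, _); lia.
case: (abc m) (abc n) => [[a b] c] [[x y] z].
by rewrite /circ_mul /=; congr (_, _, _); lia.
Qed.

Definition balanced (b : nat) : nat * nat * nat := (1 + b, b, b).

Lemma circ_mul_balanced x y :
  circ_mul (balanced x) (balanced y) = balanced (x + y + 3 * x * y).
Proof. by rewrite /circ_mul /=; congr (_, _, _); nia. Qed.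

Lemma abc_mul_balanced k b j : abc k = balanced b ->
  exists2 x, abc (j * k) = balanced x & 1 + 3 * x = (1 + 3 * b) ^ j.
Proof.
move=> abc_k; elim: j => [|j [x abc_jk aug_x]]; first by exists 0.
exists (b + x + 3 * b * x); last by rewrite expnS -aug_x; nia.
by rewrite mulSn abcD abc_k abc_jk circ_mul_balanced.
Qed.

Lemma abc_balanced k : 6 %| k -> abc k = balanced (b_ k).
Proof.
case/dvdnP=> m ->.
have [x abc_m6 _] := abc_mul_balanced 6 21 m erefl.
by rewrite /b_ abc_m6.
Qed.

Lemma b_mul k j : 6 %| k -> 1 + 3 * b_ (j * k) = (1 + 3 * b_ k) ^ j.
Proof.
move/abc_balanced=> abc_k.
have [x abc_jk <-] := abc_mul_balanced _ _ j abc_k.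
by rewrite /b_ abc_jk.
Qed.

Lemma expn1Dn_mul c b j :
  (1 + c * b) ^ j
  = 1 + c * \sum_(0 <= i < j) c ^ (j - i - 1) * 'C(j, j - i) * b ^ (j - i).
Proof.
rewrite expnDn big_ord_recl bin0 exp1n !mul1n; congr (_ + _).
rewrite big_distrr big_nat_rev add0n big_mkord /=.
apply: eq_bigr => i _; have := ltn_ord i; rewrite exp1n mul1n => lt_i_j.
have [-> ->] : j - (j - i.+1) = i.+1 /\ i.+1 - 1 = i by lia.
by rewrite /bump add1n expnMn expnS mulnCA !mulnA.
Qed.

Theorem lemma4p5 (k j : nat) :
  k %% 6 = 0 -> 1 <= j ->
  b_ (j * k) = \sum_(0 <= i < j) 3 ^ (j - i - 1) * 'C(j, j - i) * b_ k ^ (j - i).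
Proof.
move=> /eqP k_mod6 _.
have := b_mul _ j k_mod6; rewrite expn1Dn_mul.
by move/addnI/eqP; rewrite eqn_pmul2l // => /eqP.
Qed.
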